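(* Let $d\ge2$ and let $\mathbf{p}^\star=(1,p_2^\star,\dots,p_d^\star)$ be a maximizer of the problem $$\max\Big\{\frac{\prod_{i=1}^dp_i}{D_1(\mathbf{p})^d}\;:\;\mathbf{p}\in(0,\infty)^d,\ p_1=1,\ D_1(\mathbf{p})^2\ge D_j(\mathbf{p})^2\text{ for all }j\in\{2,\dots,d\}\Big\}.$$ Then $D(\mathbf{p}^\star)=D_1(\mathbf{p}^\star)=D_2(\mathbf{p}^\star)$ and $$p_2^\star=\sqrt{\tfrac13},\qquad p_j^\star=\sqrt{\tfrac23}\,\frac{1}{j-1}\quad\text{for } j\in\{3,\dots,d\}.$$
   Context: For $k\in\{1,\dots,d\}$ let $w_{k,i}=0$ for $i<k$, $w_{k,k}=k$, $w_{k,i}=i-1$ for $k<i\le d$, $D_k(\mathbf{p})=\sqrt{\sum_{i=1}^dw_{k,i}^2p_i^2}$, and $D(\mathbf{p})=\max_{k\in\{1,\dots,d\}}D_k(\mathbf{p})$. *)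

(* concrete reals R. Vectors p in R^d are modelled as
   functions nat -> R, of which only the coordinates 1..d are used. *)
From Stdlib Require Import Reals Lra.
Open Scope R_scope.

Fixpoint sum1 (n : nat) (f : nat -> R) : R :=
  match n with O => 0 | S m => sum1 m f + f (S m) end.

Fixpoint prod1 (n : nat) (f : nat -> R) : R :=
  match n with O => 1 | S m => prod1 m f * f (S m) end.

Definition w (k i : nat) : R :=
  if Nat.ltb i k then 0 else if Nat.eqb i k then INR k else INR i - 1.

Definition Dk (d k : nat) (p : nat -> R) : R :=
  sqrt (sum1 d (fun i => (w k i)^2 * (p i)^2)).

Fixpoint maxD (d n : nat) (p : nat -> R) : R :=
  match n with
  | O => 0
  | S O => Dk d 1 p
  | S m => Rmax (maxD d m p) (Dk d (S m) p)
  end.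

Definition D (d : nat) (p : nat -> R) : R := maxD d d p.

Definition objective (d : nat) (p : nat -> R) : R :=
  prod1 d p / (Dk d 1 p) ^ d.

Definition feasible (d : nat) (p : nat -> R) : Prop :=
  (forall i, (1 <= i <= d)%nat -> 0 < p i) /\
  p 1%nat = 1 /\
  (forall j, (2 <= j <= d)%nat -> (Dk d 1 p)^2 >= (Dk d j p)^2).

Definition is_maximizer (d : nat) (p : nat -> R) : Prop :=
  feasible d p /\ forall q, feasible d q -> objective d q <= objective d p.

(* Here p_1 = 1; put x = p_2^2. Since D_1^2 - D_2^2 = 1 - 3x, feasibility
   gives x <= 1/3. Write D_1^2 as the sum of the d terms (1+x)/2, (1+x)/2 and
   ((i-1) p_i)^2 for i >= 3. Up to the constant prod_i w_{1,i}^2, the squared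
   objective is then 4x/(1+x)^2 times (product of the terms)/(sum of the terms)^d.
   The first factor is at most 3/4 on (0, 1/3], with equality only at x = 1/3, and
   by AM-GM the second is at most d^(-d), with equality only if all terms are
   equal. The feasible point p_2 = sqrt(1/3), p_i = sqrt(2/3)/(i-1) attains both
   bounds, so a maximizer must too: x = 1/3 (whence D_1 = D_2) and every term
   equals 2/3, which determines p_i. *)

From Stdlib Require Import Reals Lra Lia Psatz.
Open Scope R_scope.

Lemma sum1_ext n f g : (forall i, (1 <= i <= n)%nat -> f i = g i) -> sum1 n f = sum1 n g.
Proof. induction n; simpl; intros H; auto. rewrite IHn, H; [auto|lia|intros; apply H; lia]. Qed.

Lemma prod1_ext n f g : (forall i, (1 <= i <= n)%nat -> f i = g i) -> prod1 n f = prod1 n g.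
Proof. induction n; simpl; intros H; auto. rewrite IHn, H; [auto|lia|intros; apply H; lia]. Qed.

Lemma sum1_minus n f g : sum1 n (fun i => f i - g i) = sum1 n f - sum1 n g.
Proof. induction n; simpl; [ring|]. rewrite IHn; ring. Qed.

Lemma sum1_scal_sub n f c e : sum1 n (fun i => f i * c - e) = sum1 n f * c - INR n * e.
Proof. induction n; simpl sum1; [simpl; ring|]. rewrite IHn, S_INR; ring. Qed.

Lemma sum1_const n c : sum1 n (fun _ => c) = INR n * c.
Proof. induction n; simpl sum1; [simpl; ring|]. rewrite IHn, S_INR; ring. Qed.

Lemma prod1_const n c : prod1 n (fun _ => c) = c ^ n.
Proof. induction n; simpl; [ring|]. rewrite IHn; ring. Qed.

Lemma prod1_mult n f g : prod1 n (fun i => f i * g i) = prod1 n f * prod1 n g.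
Proof. induction n; simpl; [ring|]. rewrite IHn; ring. Qed.

Lemma prod1_scal n f c : prod1 n (fun i => f i * c) = prod1 n f * c ^ n.
Proof. induction n; simpl; [ring|]. rewrite IHn; ring. Qed.

Lemma prod1_pos n f : (forall i, (1 <= i <= n)%nat -> 0 < f i) -> 0 < prod1 n f.
Proof.
  induction n; simpl; intros H; [lra|].
  apply Rmult_lt_0_compat; [apply IHn; intros|]; apply H; lia.
Qed.

Lemma sum1_nonneg n f : (forall i, (1 <= i <= n)%nat -> 0 <= f i) -> 0 <= sum1 n f.
Proof.
  induction n; simpl; intros H; [lra|].
  assert (0 <= sum1 n f) by (apply IHn; intros; apply H; lia).
  assert (0 <= f (S n)) by (apply H; lia). lra.
Qed.

Lemma sum1_ge_term n f a : (1 <= a <= n)%nat ->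
  (forall i, (1 <= i <= n)%nat -> i <> a -> 0 <= f i) -> f a <= sum1 n f.
Proof.
  induction n; simpl; intros Ha H; [lia|].
  destruct (Nat.eq_dec a (S n)) as [->|Hne].
  - assert (0 <= sum1 n f) by (apply sum1_nonneg; intros; apply H; lia). lra.
  - assert (f a <= sum1 n f) by (apply IHn; [lia|intros; apply H; lia]).
    assert (0 <= f (S n)) by (apply H; lia). lra.
Qed.

Lemma sum1_ge_two_terms n f a b : (1 <= a)%nat -> (a < b <= n)%nat ->
  (forall i, (1 <= i <= n)%nat -> i <> a -> i <> b -> 0 <= f i) -> f a + f b <= sum1 n f.
Proof.
  induction n; simpl; intros Ha Hb H; [lia|].
  destruct (Nat.eq_dec b (S n)) as [->|Hne].
  - assert (f a <= sum1 n f) by (apply sum1_ge_term; [lia|intros; apply H; lia]). lra.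
  - assert (f a + f b <= sum1 n f) by (apply IHn; [lia|lia|intros; apply H; lia]).
    assert (0 <= f (S n)) by (apply H; lia). lra.
Qed.

Lemma sum1_eq_tail2 n f g : (2 <= n)%nat -> (forall i, (3 <= i <= n)%nat -> f i = g i) ->
  sum1 n f - (f 1%nat + f 2%nat) = sum1 n g - (g 1%nat + g 2%nat).
Proof.
  induction n as [|n IH]; intros Hn H; [lia|].
  destruct (Nat.eq_dec n 1) as [->|Hn1]; [simpl; ring|].
  simpl sum1. rewrite (H (S n)) by lia.
  assert (sum1 n f - (f 1%nat + f 2%nat) = sum1 n g - (g 1%nat + g 2%nat))
    by (apply IH; [lia|intros; apply H; lia]). lra.
Qed.

Lemma prod1_eq_tail2 n f g : (2 <= n)%nat -> (forall i, (3 <= i <= n)%nat -> f i = g i) ->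
  prod1 n f * (g 1%nat * g 2%nat) = prod1 n g * (f 1%nat * f 2%nat).
Proof.
  induction n as [|n IH]; intros Hn H; [lia|].
  destruct (Nat.eq_dec n 1) as [->|Hn1]; [simpl; ring|].
  simpl prod1. rewrite (H (S n)) by lia.
  replace (prod1 n f * g (S n) * (g 1%nat * g 2%nat))
    with (prod1 n f * (g 1%nat * g 2%nat) * g (S n)) by ring.
  rewrite IH by (lia || (intros; apply H; lia)). ring.
Qed.

Lemma le_exp_pred t : t <= exp (t - 1).
Proof. pose proof (exp_ineq1_le (t - 1)). lra. Qed.

Lemma lt_exp_pred t : t <> 1 -> t < exp (t - 1).
Proof. intro. pose proof (exp_ineq1 (t - 1)). lra. Qed.

Lemma prod1_le_exp_sum1 n g : (forall i, (1 <= i <= n)%nat -> 0 < g i) ->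
  prod1 n g <= exp (sum1 n (fun i => g i - 1)).
Proof.
  induction n; simpl; intros H; [rewrite exp_0; lra|].
  rewrite exp_plus. apply Rmult_le_compat.
  - left; apply prod1_pos; intros; apply H; lia.
  - left; apply H; lia.
  - apply IHn; intros; apply H; lia.
  - apply le_exp_pred.
Qed.

Lemma prod1_lt_exp_sum1 n g j : (forall i, (1 <= i <= n)%nat -> 0 < g i) ->
  (1 <= j <= n)%nat -> g j <> 1 -> prod1 n g < exp (sum1 n (fun i => g i - 1)).
Proof.
  induction n; simpl; intros H Hj Hg; [lia|].
  rewrite exp_plus.
  assert (Hp : 0 < prod1 n g) by (apply prod1_pos; intros; apply H; lia).
  assert (Hn : 0 < g (S n)) by (apply H; lia).
  pose proof (exp_pos (sum1 n (fun i => g i - 1))).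
  destruct (Nat.eq_dec j (S n)) as [->|Hne].
  - pose proof (prod1_le_exp_sum1 n g ltac:(intros; apply H; lia)).
    pose proof (lt_exp_pred _ Hg). nra.
  - pose proof (IHn ltac:(intros; apply H; lia) ltac:(lia) Hg).
    pose proof (le_exp_pred (g (S n))). nra.
Qed.

(* AM-GM comes from [t <= exp (t - 1)] applied to the terms divided by their mean [c]:
   the exponents then sum to [0]. *)
Lemma amgm_normalized n a : (0 < n)%nat -> (forall i, (1 <= i <= n)%nat -> 0 < a i) ->
  let c := sum1 n a / INR n in
  0 < c /\ sum1 n (fun i => a i * / c - 1) = 0 /\ prod1 n (fun i => a i * / c) = prod1 n a / c ^ n.
Proof.
  intros Hn Ha c.
  assert (HS : 0 < sum1 n a).
  { apply Rlt_le_trans with (a 1%nat); [apply Ha; lia|].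
    apply sum1_ge_term; [lia|intros; left; apply Ha; lia]. }
  assert (HN : 0 < INR n) by (apply lt_0_INR; lia).
  assert (Hc : 0 < c) by (apply Rdiv_lt_0_compat; auto).
  split; [auto|split].
  - rewrite sum1_scal_sub. unfold c. field. lra.
  - rewrite prod1_scal, pow_inv. unfold Rdiv. ring.
Qed.

Lemma amgm n a : (0 < n)%nat -> (forall i, (1 <= i <= n)%nat -> 0 < a i) ->
  prod1 n a * INR n ^ n <= sum1 n a ^ n.
Proof.
  intros Hn Ha. destruct (amgm_normalized n a Hn Ha) as (Hc & Hsum & Hprod).
  set (c := sum1 n a / INR n) in *.
  assert (Hg : forall i, (1 <= i <= n)%nat -> 0 < a i * / c)
    by (intros; apply Rmult_lt_0_compat; [apply Ha|apply Rinv_0_lt_compat]; auto).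
  pose proof (prod1_le_exp_sum1 n _ Hg) as Hle. cbv beta in Hle.
  rewrite Hsum, exp_0, Hprod in Hle.
  assert (HN : 0 < INR n) by (apply lt_0_INR; lia).
  assert (Hcn : 0 < c ^ n) by (apply pow_lt; auto).
  replace (sum1 n a) with (c * INR n) by (unfold c; field; lra).
  rewrite Rpow_mult_distr. apply Rmult_le_compat_r; [left; apply pow_lt; auto|].
  apply Rmult_le_reg_r with (/ c ^ n); [apply Rinv_0_lt_compat; auto|].
  rewrite Rinv_r by lra. auto.
Qed.

Lemma amgm_eq n a : (0 < n)%nat -> (forall i, (1 <= i <= n)%nat -> 0 < a i) ->
  sum1 n a ^ n <= prod1 n a * INR n ^ n ->
  forall i, (1 <= i <= n)%nat -> a i = sum1 n a / INR n.
Proof.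
  intros Hn Ha Heq j Hj. destruct (amgm_normalized n a Hn Ha) as (Hc & Hsum & Hprod).
  set (c := sum1 n a / INR n) in *.
  destruct (Req_dec (a j) c) as [|Hne]; [auto|exfalso].
  assert (Hg : forall i, (1 <= i <= n)%nat -> 0 < a i * / c)
    by (intros; apply Rmult_lt_0_compat; [apply Ha|apply Rinv_0_lt_compat]; auto).
  assert (Hgj : a j * / c <> 1).
  { intro H1. apply Hne. apply (f_equal (Rmult c)) in H1.
    rewrite Rmult_1_r, Rmult_comm, Rmult_assoc, Rinv_l in H1 by lra. lra. }
  pose proof (prod1_lt_exp_sum1 n _ j Hg Hj Hgj) as Hlt. cbv beta in Hlt.
  rewrite Hsum, exp_0, Hprod in Hlt.
  assert (HN : 0 < INR n) by (apply lt_0_INR; lia).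
  assert (Hcn : 0 < c ^ n) by (apply pow_lt; auto).
  assert (HP : prod1 n a < c ^ n).
  { apply Rmult_lt_reg_r with (/ c ^ n); [apply Rinv_0_lt_compat; auto|].
    rewrite Rinv_r by lra. auto. }
  replace (sum1 n a) with (c * INR n) in Heq by (unfold c; field; lra).
  rewrite Rpow_mult_distr in Heq.
  assert (0 < INR n ^ n) by (apply pow_lt; auto). nra.
Qed.

Lemma INR_sub_one_pos i : (2 <= i)%nat -> 0 < INR i - 1.
Proof. intro Hi. apply (le_INR 2) in Hi. simpl in Hi. lra. Qed.

Lemma w_lt k i : (i < k)%nat -> w k i = 0.
Proof. intro; unfold w. destruct (Nat.ltb_spec i k); [auto|lia]. Qed.

Lemma w_diag k : w k k = INR k.
Proof. unfold w. destruct (Nat.ltb_spec k k); [lia|]. rewrite Nat.eqb_refl; auto. Qed.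

Lemma w_gt k i : (k < i)%nat -> w k i = INR i - 1.
Proof.
  intro; unfold w. destruct (Nat.ltb_spec i k); [lia|].
  destruct (Nat.eqb_spec i k); [lia|auto].
Qed.

Lemma w1_pos i : (1 <= i)%nat -> 0 < w 1 i.
Proof.
  intros Hi. destruct (Nat.eq_dec i 1) as [->|Hi1]; [rewrite w_diag; simpl; lra|].
  rewrite w_gt by lia. apply INR_sub_one_pos. lia.
Qed.

Lemma Dk_sq d k p : Dk d k p ^ 2 = sum1 d (fun i => w k i ^ 2 * p i ^ 2).
Proof. unfold Dk. apply pow2_sqrt. apply sum1_nonneg. intros. nra. Qed.

Lemma maxD_eq_Dk1 d p n : (1 <= n <= d)%nat ->
  (forall k, (2 <= k <= d)%nat -> Dk d k p <= Dk d 1 p) -> maxD d n p = Dk d 1 p.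
Proof.
  induction n; intros Hn H; [lia|]. destruct n; [reflexivity|].
  change (Rmax (maxD d (S n) p) (Dk d (S (S n)) p) = Dk d 1 p).
  rewrite IHn by (auto; lia). apply Rmax_left. apply H. lia.
Qed.

Lemma Dk1_sq_sub_Dk2_sq d p : (2 <= d)%nat ->
  Dk d 1 p ^ 2 - Dk d 2 p ^ 2 = p 1%nat ^ 2 - 3 * p 2%nat ^ 2.
Proof.
  intros Hd. rewrite !Dk_sq.
  assert (Htail := sum1_eq_tail2 d (fun i => w 1 i ^ 2 * p i ^ 2) (fun i => w 2 i ^ 2 * p i ^ 2)
    Hd ltac:(intros; cbv beta; rewrite !w_gt by lia; ring)).
  cbv beta in Htail. rewrite w_diag, (w_gt 1 2), (w_lt 2 1), w_diag in Htail by lia.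
  simpl INR in Htail. lra.
Qed.

Lemma Dk1_sq_sub_Dkj_sq_ge d j p : (2 <= j <= d)%nat ->
  p 1%nat ^ 2 + ((INR j - 1) ^ 2 - INR j ^ 2) * p j ^ 2 <= Dk d 1 p ^ 2 - Dk d j p ^ 2.
Proof.
  intros Hj. rewrite !Dk_sq, <- sum1_minus.
  eapply Rle_trans; [|apply (sum1_ge_two_terms d _ 1 j); [lia|lia|]].
  - cbv beta. rewrite w_diag, (w_lt j 1), (w_gt 1 j), w_diag by lia. simpl INR. lra.
  - intros i Hi Hi1 Hij. destruct (Nat.lt_ge_cases i j).
    + rewrite (w_lt j i) by auto. nra.
    + rewrite (w_gt j i), (w_gt 1 i) by lia. lra.
Qed.

Lemma feasible_Dk_le_Dk1 d k p : feasible d p -> (2 <= k <= d)%nat -> Dk d k p <= Dk d 1 p.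
Proof.
  intros (_ & _ & Hc) Hk. pose proof (Hc k Hk).
  assert (0 <= Dk d k p) by apply sqrt_pos. assert (0 <= Dk d 1 p) by apply sqrt_pos. nra.
Qed.

Definition D1_terms (p : nat -> R) (i : nat) : R :=
  if (i <=? 2)%nat then (p 1%nat ^ 2 + p 2%nat ^ 2) / 2 else (w 1 i * p i) ^ 2.

Lemma D1_terms_head p i : (i <= 2)%nat -> D1_terms p i = (p 1%nat ^ 2 + p 2%nat ^ 2) / 2.
Proof. intro. unfold D1_terms. destruct (Nat.leb_spec i 2); [auto|lia]. Qed.

Lemma D1_terms_tail p i : (3 <= i)%nat -> D1_terms p i = ((INR i - 1) * p i) ^ 2.
Proof. intro. unfold D1_terms. destruct (Nat.leb_spec i 2); [lia|]. rewrite w_gt by lia. auto. Qed.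

Lemma D1_terms_pos d p : (2 <= d)%nat -> (forall i, (1 <= i <= d)%nat -> 0 < p i) ->
  forall i, (1 <= i <= d)%nat -> 0 < D1_terms p i.
Proof.
  intros Hd Hp i Hi. destruct (Nat.le_gt_cases i 2).
  - rewrite D1_terms_head by auto.
    pose proof (Hp 1%nat ltac:(lia)). pose proof (Hp 2%nat ltac:(lia)). nra.
  - rewrite D1_terms_tail by lia. apply pow_lt.
    apply Rmult_lt_0_compat; [apply INR_sub_one_pos; lia|apply Hp; lia].
Qed.

Lemma sum1_D1_terms d p : (2 <= d)%nat -> sum1 d (D1_terms p) = Dk d 1 p ^ 2.
Proof.
  intros Hd. rewrite Dk_sq.
  assert (Htail := sum1_eq_tail2 d (D1_terms p) (fun i => w 1 i ^ 2 * p i ^ 2) Hd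
    ltac:(intros; rewrite D1_terms_tail, w_gt by lia; ring)).
  cbv beta in Htail. rewrite !D1_terms_head, w_diag, (w_gt 1 2) in Htail by lia.
  simpl INR in Htail. lra.
Qed.

Lemma prod1_D1_terms d p : (2 <= d)%nat ->
  prod1 d (D1_terms p) * (p 1%nat ^ 2 * p 2%nat ^ 2)
  = prod1 d (fun i => w 1 i ^ 2) * prod1 d p ^ 2 * ((p 1%nat ^ 2 + p 2%nat ^ 2) / 2) ^ 2.
Proof.
  intros Hd.
  assert (Htail := prod1_eq_tail2 d (D1_terms p) (fun i => w 1 i ^ 2 * (p i * p i)) Hd
    ltac:(intros; rewrite D1_terms_tail, w_gt by lia; ring)).
  cbv beta in Htail. rewrite !D1_terms_head, w_diag, (w_gt 1 2) in Htail by lia.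
  simpl INR in Htail. rewrite !prod1_mult in Htail.
  replace (p 1%nat ^ 2 * p 2%nat ^ 2)
    with (1 ^ 2 * (p 1%nat * p 1%nat) * ((1 + 1 - 1) ^ 2 * (p 2%nat * p 2%nat))) by ring.
  rewrite Htail. ring.
Qed.

Lemma Dk1_sq_pos d p : (2 <= d)%nat -> (forall i, (1 <= i <= d)%nat -> 0 < p i) ->
  0 < Dk d 1 p ^ 2.
Proof.
  intros Hd Hp. rewrite <- sum1_D1_terms by auto.
  pose proof (D1_terms_pos d p Hd Hp) as Ha.
  apply Rlt_le_trans with (D1_terms p 1%nat); [apply Ha; lia|].
  apply sum1_ge_term; [lia|intros; left; apply Ha; lia].
Qed.

Lemma objective_pos d p : (2 <= d)%nat -> (forall i, (1 <= i <= d)%nat -> 0 < p i) ->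
  0 < objective d p.
Proof.
  intros Hd Hp. apply Rdiv_lt_0_compat; [apply prod1_pos; auto|].
  apply pow_lt. pose proof (Dk1_sq_pos d p Hd Hp). unfold Dk in *.
  pose proof (sqrt_pos (sum1 d (fun i => w 1 i ^ 2 * p i ^ 2))). nra.
Qed.

Lemma objective_sq_D1_terms d p : (2 <= d)%nat ->
  (forall i, (1 <= i <= d)%nat -> 0 < p i) -> p 1%nat = 1 ->
  objective d p ^ 2 * prod1 d (fun i => w 1 i ^ 2) * sum1 d (D1_terms p) ^ d
    * (1 + p 2%nat ^ 2) ^ 2
  = 4 * p 2%nat ^ 2 * prod1 d (D1_terms p).
Proof.
  intros Hd Hp H1.
  pose proof (prod1_D1_terms d p Hd) as Hprod. rewrite H1 in Hprod.
  pose proof (Dk1_sq_pos d p Hd Hp) as HD.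
  assert (HDd : Dk d 1 p ^ d <> 0) by (apply pow_nonzero; nra).
  rewrite sum1_D1_terms, <- pow_mult, Nat.mul_comm, pow_mult by auto.
  unfold objective.
  replace (4 * p 2%nat ^ 2 * prod1 d (D1_terms p))
    with (4 * (prod1 d (D1_terms p) * (1 ^ 2 * p 2%nat ^ 2))) by ring.
  rewrite Hprod. field. auto.
Qed.

Definition optimum (i : nat) : R :=
  match i with
  | 1%nat => 1
  | 2%nat => sqrt (1/3)
  | _ => sqrt (2/3) * (1 / (INR i - 1))
  end.

Lemma optimum_ge3 i : (3 <= i)%nat -> optimum i = sqrt (2/3) * (1 / (INR i - 1)).
Proof. intro. destruct i as [|[|[|i]]]; [lia..|reflexivity]. Qed.

Lemma optimum_2_sq : optimum 2 ^ 2 = 1/3.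
Proof. apply pow2_sqrt. lra. Qed.

Lemma sub_one_mul_optimum_sq i : (3 <= i)%nat -> ((INR i - 1) * optimum i) ^ 2 = 2/3.
Proof.
  intros Hi. rewrite optimum_ge3 by auto. pose proof (INR_sub_one_pos i ltac:(lia)).
  replace ((INR i - 1) * (sqrt (2/3) * (1 / (INR i - 1)))) with (sqrt (2/3)) by (field; lra).
  apply pow2_sqrt. lra.
Qed.

Lemma D1_terms_optimum i : (1 <= i)%nat -> D1_terms optimum i = 2/3.
Proof.
  intros Hi. destruct (Nat.le_gt_cases i 2).
  - rewrite D1_terms_head, optimum_2_sq by auto. simpl. lra.
  - rewrite D1_terms_tail by lia. apply sub_one_mul_optimum_sq. lia.
Qed.

Lemma optimum_pos i : (1 <= i)%nat -> 0 < optimum i.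
Proof.
  intros Hi. destruct (Nat.leb_spec i 2).
  - destruct i as [|[|[|i]]]; try lia; simpl; [lra|apply sqrt_lt_R0; lra].
  - rewrite optimum_ge3 by lia. pose proof (INR_sub_one_pos i ltac:(lia)).
    apply Rmult_lt_0_compat; [apply sqrt_lt_R0; lra|apply Rdiv_lt_0_compat; lra].
Qed.

Lemma optimum_feasible d : (2 <= d)%nat -> feasible d optimum.
Proof.
  intros Hd. split; [|split; [reflexivity|]].
  - intros i Hi. apply optimum_pos. lia.
  - intros j Hj. pose proof (Dk1_sq_sub_Dkj_sq_ge d j optimum Hj) as Hdiff.
    change (optimum 1) with 1 in Hdiff.
    enough (0 <= 1 ^ 2 + ((INR j - 1) ^ 2 - INR j ^ 2) * optimum j ^ 2) by lra.
    destruct (Nat.eq_dec j 2) as [->|Hj2].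
    + rewrite optimum_2_sq. simpl. lra.
    + pose proof (sub_one_mul_optimum_sq j ltac:(lia)) as Hq.
      pose proof (INR_sub_one_pos j ltac:(lia)).
      assert (H3 : INR 3 <= INR j) by (apply le_INR; lia). simpl in H3.
      assert (Hj94 : INR j ^ 2 <= 9/4 * (INR j - 1) ^ 2) by nra.
      apply Rmult_le_compat_r with (r := optimum j ^ 2) in Hj94; [|apply pow2_ge_0].
      rewrite Rpow_mult_distr in Hq. nra.
Qed.

Lemma objective_sq_optimum d : (2 <= d)%nat ->
  objective d optimum ^ 2 * prod1 d (fun i => w 1 i ^ 2) * (4 * INR d ^ d) = 3.
Proof.
  intros Hd.
  pose proof (objective_sq_D1_terms d optimum Hd ltac:(intros; apply optimum_pos; lia)
    eq_refl) as Hobj.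
  rewrite (sum1_ext d _ (fun _ => 2/3)), (prod1_ext d (D1_terms optimum) (fun _ => 2/3)) in Hobj
    by (intros; apply D1_terms_optimum; lia).
  rewrite sum1_const, prod1_const, optimum_2_sq, Rpow_mult_distr in Hobj.
  assert (H23 : 0 < (2/3) ^ d) by (apply pow_lt; lra).
  apply Rmult_eq_reg_r with ((2/3) ^ d * (16/9)); [|nra]. lra.
Qed.

Lemma feasible_p2_sq_le d p : (2 <= d)%nat -> feasible d p -> p 2%nat ^ 2 <= 1/3.
Proof.
  intros Hd (_ & H1 & Hc). pose proof (Dk1_sq_sub_Dk2_sq d p Hd) as Hdiff.
  pose proof (Hc 2%nat ltac:(lia)). rewrite H1 in Hdiff. lra.
Qed.

Lemma objective_sq_ge_optimum d p : (2 <= d)%nat -> feasible d p ->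
  objective d optimum ^ 2 <= objective d p ^ 2 ->
  p 2%nat ^ 2 = 1/3 /\ forall i, (1 <= i <= d)%nat -> D1_terms p i = 2/3.
Proof.
  intros Hd Hp Hge. pose proof (feasible_p2_sq_le d p Hd Hp) as Hx.
  destruct Hp as (Hpos & H1 & _).
  pose proof (objective_sq_D1_terms d p Hd Hpos H1) as Hobj.
  pose proof (objective_sq_optimum d Hd) as Hopt.
  pose proof (D1_terms_pos d p Hd Hpos) as Ha.
  pose proof (amgm d (D1_terms p) ltac:(lia) Ha) as Hamgm.
  set (x := p 2%nat ^ 2) in *. set (S := sum1 d (D1_terms p)) in *.
  set (P := prod1 d (D1_terms p)) in *. set (W := prod1 d (fun i => w 1 i ^ 2)) in *.
  set (O := objective d p ^ 2) in *. set (N := INR d ^ d) in *.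
  assert (Hx0 : 0 < x) by (apply pow_lt, Hpos; lia).
  assert (HW : 0 < W) by (apply prod1_pos; intros; apply pow_lt, w1_pos; lia).
  assert (HP : 0 < P) by (apply prod1_pos; auto).
  assert (HN : 0 < N) by (apply pow_lt, lt_0_INR; lia).
  assert (HSd : 0 < S ^ d) by (pose proof (Rmult_lt_0_compat _ _ HP HN); lra).
  assert (HO : 3 <= O * W * (4 * N)).
  { rewrite <- Hopt. apply Rmult_le_compat_r; [lra|].
    apply Rmult_le_compat_r; [lra|auto]. }
  assert (Hquad : 16 * x <= 3 * (1 + x) ^ 2) by nra.
  assert (Hchain : 3 * S ^ d * (1 + x) ^ 2 <= 16 * x * N * P).
  { replace (16 * x * N * P) with (4 * N * (O * W * S ^ d * (1 + x) ^ 2)) by (rewrite Hobj; ring).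
    assert (0 < S ^ d * (1 + x) ^ 2) by (apply Rmult_lt_0_compat; [|apply pow_lt]; lra).
    nra. }
  assert (Hx3 : x = 1/3).
  { assert (HNP : 0 < N * P) by nra.
    assert (3 * (1 + x) ^ 2 <= 16 * x) by (apply Rmult_le_reg_r with (N * P); nra).
    assert ((1 - 3 * x) * (3 - x) <= 0) by nra. nra. }
  assert (HNP : S ^ d <= P * N) by (rewrite Hx3 in Hchain; nra).
  split; [auto|]. intros i Hi.
  rewrite (amgm_eq d (D1_terms p) ltac:(lia) Ha HNP i Hi).
  rewrite <- (amgm_eq d (D1_terms p) ltac:(lia) Ha HNP 1%nat ltac:(lia)).
  rewrite D1_terms_head, H1 by lia. fold x. rewrite Hx3. lra.
Qed.

Theorem lemma7 (d : nat) (pstar : nat -> R) :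
  (2 <= d)%nat ->
  is_maximizer d pstar ->
  D d pstar = Dk d 1 pstar /\ Dk d 1 pstar = Dk d 2 pstar /\
  pstar 2%nat = sqrt (1/3) /\
  (forall j, (3 <= j <= d)%nat -> pstar j = sqrt (2/3) * (1 / (INR j - 1))).
Proof.
  intros Hd [Hfeas Hmax].
  assert (Hopt : objective d optimum ^ 2 <= objective d pstar ^ 2).
  { apply pow_incr. split; [left; apply objective_pos; [auto|intros; apply optimum_pos; lia]|].
    apply Hmax, optimum_feasible, Hd. }
  destruct (objective_sq_ge_optimum d pstar Hd Hfeas Hopt) as [Hx Hterms].
  pose proof Hfeas as (Hpos & H1 & _).
  split; [|split; [|split]].
  - apply maxD_eq_Dk1; [lia|]. intros. apply feasible_Dk_le_Dk1; auto.
  - rewrite <- (sqrt_pow2 (Dk d 1 pstar)), <- (sqrt_pow2 (Dk d 2 pstar)) by apply sqrt_pos.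
    pose proof (Dk1_sq_sub_Dk2_sq d pstar Hd) as Hdiff. rewrite H1 in Hdiff. f_equal. lra.
  - rewrite <- Hx, sqrt_pow2; [|left; apply Hpos; lia]. reflexivity.
  - intros j Hj. specialize (Hterms j ltac:(lia)). rewrite D1_terms_tail in Hterms by lia.
    pose proof (INR_sub_one_pos j ltac:(lia)).
    rewrite <- Hterms, sqrt_pow2 by (apply Rmult_le_pos; [lra|left; apply Hpos; lia]).
    field. lra.
Qed.
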